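(* Let $P,Q$ be finite posets, $R$ an indecomposable commutative unital ring, $\Phi:I^3(P,R)\to I^3(Q,R)$ an $R$-linear algebra isomorphism, and $\varphi:P\to Q$ the bijection such that $\Phi(e_x)-e_{\varphi(x)}\in J^3_1(Q,R)$ for all $x\in P$ (such a bijection exists and is unique). Then for all $x<y$ in $P$ with $l(x,y)=1$ we have $\varphi(x)<\varphi(y)$ and $$\Phi(e_{xxy}+e_{xyy})=e_{\varphi(x)\varphi(x)\varphi(y)}+e_{\varphi(x)\varphi(y)\varphi(y)}+\sigma_{xy}$$ for some $\sigma_{xy}\in J^3_2(Q,R)$.
   Context: A commutative ring is indecomposable if its only idempotents are $0$ and $1$. For a finite poset $P$, $P^3_\le=\{(x,y,z)\in P^3: x\le y\le z\}$, and $I^3(P,R)$ is the $R$-module of functions $f:P^3_\le\to R$ with multiplication $(fg)(x_1,x_2,x_3)=\sum f(x_1,y_1,y_2)g(y_1,y_2,x_3)$ over all $x_1\le y_1\le x_2\le y_2\le x_3$. For $x\le y\le z$, $e_{xyz}$ is the function equal to $1$ at $(x,y,z)$ and $0$ elsewhere, and $e_x:=e_{xxx}$. For $a\le b$, $l(a,b)$ is the maximum of $|C|-1$ over chains $C$ in the interval $[a,b]$. $J^3_k(Q,R)=\{f\in I^3(Q,R): f(x_1,x_2,x_3)=0 \text{ whenever } l(x_1,x_3)<k\}$. *)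

From HB Require Import structures.
From mathcomp Require Import all_boot all_order all_algebra.
Set Implicit Arguments. Unset Strict Implicit. Unset Printing Implicit Defensive.
Import Order.TTheory GRing.Theory.
Local Open Scope ring_scope.

Section Defs.
Variables (d : Order.disp_t) (P : finPOrderType d) (R : comNzRingType).

Definition is_chain3 (t : P * P * P) : bool :=
  ((t.1.1 <= t.1.2)%O && (t.1.2 <= t.2)%O).
Definition chain3 := {t : P * P * P | is_chain3 t}.

Local Notation I3 := {ffun chain3 -> R^o}.

(* value of f at (x,y,z), 0 if (x,y,z) is not in P^3_<= *)
Definition app3 (f : I3) (x y z : P) : R :=
  if insub (x, y, z) is Some t then f t else 0.

Definition mul3 (f g : I3) : I3 :=
  [ffun t : chain3 =>
     let: (x1, x2, x3) := val t in
     \sum_(y1 : P) \sum_(y2 : P | [&& (x1 <= y1)%O, (y1 <= x2)%O,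
                                     (x2 <= y2)%O & (y2 <= x3)%O])
        app3 f x1 y1 y2 * app3 g y1 y2 x3].

Definition e3 (x y z : P) : I3 :=
  [ffun t : chain3 => if val t == (x, y, z) then 1 else 0].

Definition chain_in (a b : P) (C : {set P}) : bool :=
  [forall u in C, (a <= u)%O && (u <= b)%O] &&
  [forall u in C, forall v in C, (u <= v)%O || (v <= u)%O].

Definition lenP (a b : P) : nat :=
  \max_(C : {set P} | chain_in a b C) (#|C|.-1).

Definition J3 (k : nat) (f : I3) : Prop :=
  forall t : chain3, (lenP (val t).1.1 (val t).2 < k)%N -> f t = 0.

End Defs.

Notation I3 P R := {ffun chain3 P -> R^o}.

Definition indecomposable (R : comNzRingType) : Prop :=
  forall e : R, e * e = e -> e = 0 \/ e = 1.

From HB Require Import structures.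
From mathcomp Require Import all_boot all_order all_algebra.
Set Implicit Arguments. Unset Strict Implicit. Unset Printing Implicit Defensive.
Import Order.TTheory GRing.Theory.
Local Open Scope ring_scope.

(* Let s = e_xxy + e_xyy and S = Phi s.  At a covering pair a < c, products in
   I^3 evaluated at (a,a,c) or (a,c,c) only involve values at (a,a,a), (a,a,c),
   (a,c,c) and (c,c,c).  Since s, hence S, is an idempotent with zero diagonal,
   S(a,a,c) = S(a,c,c) is an idempotent of R, so it is 0 or 1; the images of
   e_x s = e_xxy, s e_y = e_xyy, e_xxy e_xyy = s and s e_x = 0 = e_y s force it
   to be 0 unless (a,c) = (phi x, phi y).  If it were 0 there as well, S would
   lie in J^3_2.  But a multiplicative linear map that transports diagonal
   values along a map of posets sends J^3_2 into J^3_2: a basis element e_abc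
   with a, b, c distinct is annihilated on both sides by the idempotents e_z,
   and for a < m < c, e_aac (resp. e_acc) differs from e_aam e_amc (resp.
   e_amc e_mcc) by a sum of such elements, while J^3_2 is a two-sided ideal.
   Applied to the inverse of Phi, this would put s into J^3_2. *)

Section Covers.
Variables (d : Order.disp_t) (P : finPOrderType d).
Implicit Types (a b c m q : P).

Definition covby a c : bool :=
  (a < c)%O && [forall m, (a <= m <= c)%O ==> (m == a) || (m == c)].

Lemma covby_lt a c : covby a c -> (a < c)%O.
Proof. by case/andP. Qed.

Lemma covbyP a c m : covby a c -> (a <= m <= c)%O -> (m == a) || (m == c).
Proof. by case/andP=> _ /forallP/(_ m)/implyP. Qed.

Lemma not_covby a c : (a < c)%O -> ~~ covby a c -> exists2 m, (a < m)%O & (m < c)%O.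
Proof.
rewrite /covby => ac; rewrite ac /= => /forallPn[m]; rewrite negb_imply negb_or.
by case/andP=> /andP[am mc] /andP[ma mc']; exists m; rewrite lt_def ?am ?mc ?andbT // eq_sym.
Qed.

Lemma big_itv_pt (V : Type) (idx : V) (op : Monoid.law idx) b (F : P -> V) :
  \big[op/idx]_(m | (b <= m <= b)%O) F m = F b.
Proof. by apply: big_pred1 => m; rewrite /= eq_le andbC. Qed.

Lemma big_covby (V : Type) (idx : V) (op : Monoid.com_law idx) a c (F : P -> V) :
  covby a c -> \big[op/idx]_(m | (a <= m <= c)%O) F m = op (F a) (F c).
Proof.
move=> ac; have ac' := ltW (covby_lt ac).
rewrite (bigD1 a) ?lexx ?ac' //; congr (op _ _); apply: big_pred1 => m /=.
apply/andP/eqP => [[/(covbyP ac)/orP[/eqP-> | /eqP//]] | ->]; first by rewrite eqxx.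
by rewrite lexx ac' (gt_eqF (covby_lt ac)).
Qed.

Lemma lenPxx q : lenP q q = 0%N.
Proof.
apply/eqP; rewrite -leqn0; apply/bigmax_leqP => C /andP[/forall_inP inC _].
have /subset_leq_card : C \subset [set q].
  by apply/subsetP => u /inC uq; rewrite inE eq_le andbC.
by rewrite cards1; case: #|C| => [|[|]].
Qed.

Lemma lenP_ge2 a m c : (a < m)%O -> (m < c)%O -> (2 <= lenP a c)%N.
Proof.
move=> am mc; have ac := lt_trans am mc.
pose C := a |: (m |: [set c]).
have chainC : chain_in a c C.
  apply/andP; split; apply/forall_inP => u; rewrite !inE => /or3P[] /eqP->;
  rewrite ?lexx ?(ltW am) ?(ltW mc) ?(ltW ac) //;
  by apply/forall_inP => v; rewrite !inE => /or3P[] /eqP->;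
     rewrite ?lexx ?(ltW am) ?(ltW mc) ?(ltW ac) ?orbT.
apply: leq_trans (leq_bigmax_cond _ chainC).
by rewrite !cardsU1 cards1 !inE (lt_eqF am) (lt_eqF ac) (lt_eqF mc).
Qed.

Lemma covby_of_lenP a c : (a < c)%O -> (lenP a c < 2)%N -> covby a c.
Proof.
move=> ac lac; rewrite /covby ac; apply/forallP => m; apply/implyP => /andP[am mc].
case: (eqVneq m a) => //= ma; case: (eqVneq m c) => //= mc'.
have am' : (a < m)%O by rewrite lt_def ma am.
have mc'' : (m < c)%O by rewrite lt_def eq_sym mc' mc.
by move: lac; rewrite ltnNge (lenP_ge2 am' mc'').
Qed.

(* The triples (a,b,c) of P^3_<= with l(a,c) < 2, see [low3_of_lenP]. *)
Definition low3 a b c : Prop := (a = b /\ b = c) \/ (covby a c /\ (b = a \/ b = c)).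

Lemma low3_qqq q : low3 q q q. Proof. by left. Qed.
Lemma low3_aac a c : covby a c -> low3 a a c. Proof. by right; split; [|left]. Qed.
Lemma low3_acc a c : covby a c -> low3 a c c. Proof. by right; split; [|right]. Qed.

Lemma low3_of_lenP a b c : (a <= b)%O -> (b <= c)%O -> (lenP a c < 2)%N -> low3 a b c.
Proof.
move=> ab bc lac; case: (eqVneq a c) => [ac|ac].
  by left; subst c; split => //; apply/le_anti; rewrite ab bc.
have cov : covby a c by apply: covby_of_lenP; rewrite // lt_neqAle ac (le_trans ab bc).
by right; split=> //; case/orP: (covbyP cov (introT andP (conj ab bc))) => /eqP; auto.
Qed.

End Covers.

#[local] Hint Resolve low3_qqq low3_aac low3_acc : core.

Section Incidence3.
Variables (d : Order.disp_t) (P : finPOrderType d) (R : comNzRingType).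
Implicit Types (f g h : I3 P R) (a b c m p q x y z : P).

Lemma app3_val f (t : chain3 P) : app3 f (val t).1.1 (val t).1.2 (val t).2 = f t.
Proof.
case: t => [[[a b] c] abc].
by rewrite /app3 /= -[(a, b, c)]/(val (exist _ (a, b, c) abc)) valK.
Qed.

Lemma app3_notchain f a b c : ~~ (a <= b <= c)%O -> app3 f a b c = 0.
Proof. by move=> nabc; rewrite /app3 insubN. Qed.

Lemma app30 a b c : app3 (0 : I3 P R) a b c = 0.
Proof. by rewrite /app3; case: insub => [t|]; rewrite ?ffunE. Qed.

Lemma app3D f g a b c : app3 (f + g) a b c = app3 f a b c + app3 g a b c.
Proof. by rewrite /app3; case: insub => [t|]; rewrite ?ffunE ?addr0. Qed.

Lemma app3B f g a b c : app3 (f - g) a b c = app3 f a b c - app3 g a b c.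
Proof. by rewrite /app3; case: insub => [t|]; rewrite ?ffunE ?subr0. Qed.

Lemma app3Z (r : R) f a b c : app3 (r *: f) a b c = r * app3 f a b c.
Proof. by rewrite /app3; case: insub => [t|]; rewrite ?ffunE ?mulr0. Qed.

Lemma app3_sum (I : finType) (A : pred I) (F : I -> I3 P R) a b c :
  app3 (\sum_(i | A i) F i) a b c = \sum_(i | A i) app3 (F i) a b c.
Proof.
exact: (big_morph (fun f => app3 f a b c) (fun f g => app3D f g a b c) (app30 a b c)).
Qed.

Lemma app3_e3 x y z a b c :
  app3 (e3 R x y z) a b c = ([&& a == x, b == y, c == z & (x <= y <= z)%O])%:R.
Proof.
rewrite /app3; case: insubP => [t abc tE|nabc].
  rewrite ffunE tE !xpair_eqE -!andbA; rewrite /is_chain3 /= in abc.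
  case: (eqVneq a x) => [<-|_]; case: (eqVneq b y) => [<-|_];
  by case: (eqVneq c z) => [<-|_]; rewrite /= ?abc ?andbF.
case: and4P => // -[/eqP ea /eqP eb /eqP ec xyz]; subst.
by rewrite /is_chain3 /= xyz in nabc.
Qed.

Lemma eq_I3 f g :
  (forall a b c, (a <= b)%O -> (b <= c)%O -> app3 f a b c = app3 g a b c) -> f = g.
Proof.
move=> fg; apply/ffunP => t; rewrite -!app3_val.
by case: t => [[[a b] c] /= /andP[ab bc]]; apply: fg.
Qed.

Lemma I3_expansion f :
  f = \sum_(t : chain3 P) f t *: e3 R (val t).1.1 (val t).1.2 (val t).2.
Proof.
apply/ffunP => t; rewrite sum_ffunE (bigD1 t) //= [X in _ + X]big1 ?addr0 => [|t' t't].
  by rewrite !ffunE; case: t => [[[a b] c] ?] /=; rewrite eqxx; exact: (esym (mulr1 _)).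
rewrite !ffunE; case: ifP => [/eqP tE|_]; last exact: mulr0.
by case/eqP: t't; apply: val_inj; rewrite tE; case: t' {tE}=> [[[]]].
Qed.

Lemma mul3E f g a b c : (a <= b)%O -> (b <= c)%O ->
  app3 (mul3 f g) a b c =
  \sum_y1 \sum_(y2 | [&& (a <= y1)%O, (y1 <= b)%O, (b <= y2)%O & (y2 <= c)%O])
     app3 f a y1 y2 * app3 g y1 y2 c.
Proof.
move=> ab bc; have abc : is_chain3 (a, b, c) by apply/andP.
by rewrite /app3 (insubT _ abc) ffunE.
Qed.

Lemma mul3E_itv f g a b c : (a <= b)%O -> (b <= c)%O ->
  app3 (mul3 f g) a b c =
  \sum_(y1 | (a <= y1 <= b)%O) \sum_(y2 | (b <= y2 <= c)%O)
     app3 f a y1 y2 * app3 g y1 y2 c.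
Proof.
move=> ab bc; rewrite mul3E // [RHS]big_mkcond; apply: eq_bigr => y1 _.
case: ifP => [/andP[ay1 y1b] | ny1]; first by apply: eq_bigl => y2; rewrite ay1 y1b.
by apply: big_pred0 => y2; rewrite andbA ny1.
Qed.

Lemma mul3Dl f g h : mul3 (f + g) h = mul3 f h + mul3 g h.
Proof.
apply: eq_I3 => a b c ab bc; rewrite app3D !mul3E // -big_split.
by apply: eq_bigr => y1 _; rewrite -big_split; apply: eq_bigr => y2 _; rewrite app3D mulrDl.
Qed.

Lemma mul3Dr f g h : mul3 f (g + h) = mul3 f g + mul3 f h.
Proof.
apply: eq_I3 => a b c ab bc; rewrite app3D !mul3E // -big_split.
by apply: eq_bigr => y1 _; rewrite -big_split; apply: eq_bigr => y2 _; rewrite app3D mulrDr.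
Qed.

Lemma app3_mul3_qqq f g q : app3 (mul3 f g) q q q = app3 f q q q * app3 g q q q.
Proof. by rewrite mul3E_itv // !big_itv_pt. Qed.

Lemma app3_mul3_aac f g a c : covby a c ->
  app3 (mul3 f g) a a c = app3 f a a a * app3 g a a c + app3 f a a c * app3 g a c c.
Proof. by move=> ac; rewrite mul3E_itv ?(ltW (covby_lt ac)) // big_itv_pt big_covby. Qed.

Lemma app3_mul3_acc f g a c : covby a c ->
  app3 (mul3 f g) a c c = app3 f a a c * app3 g a c c + app3 f a c c * app3 g c c c.
Proof. by move=> ac; rewrite mul3E_itv ?(ltW (covby_lt ac)) // big_covby // !big_itv_pt. Qed.

Lemma app3_mul3_e3l a b c g x1 x2 x3 : (a <= b)%O -> (b <= c)%O ->
  (x1 <= x2)%O -> (x2 <= x3)%O ->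
  app3 (mul3 (e3 R a b c) g) x1 x2 x3 =
  if [&& x1 == a, (b <= x2)%O & (x2 <= c)%O] then app3 g b c x3 else 0.
Proof.
move=> ab bc x12 x23; rewrite mul3E // (bigD1 b) //= [X in _ + X]big1 ?addr0; last first.
  by move=> y1 y1b; rewrite big1 // => y2 _; rewrite app3_e3 (negbTE y1b) andbF mul0r.
rewrite big_mkcond (bigD1 c) //= [X in _ + X]big1 ?addr0; last first.
  by move=> y2 y2c; case: ifP => // _; rewrite app3_e3 (negbTE y2c) !andbF mul0r.
rewrite app3_e3 !eqxx ab bc /= andbT.
case: (eqVneq x1 a) => [->|_]; last by rewrite mul0r; case: ifP.
rewrite ab /= mul1r.
case: (boolP (b <= x2)%O) => //= bx2; case: (boolP (x2 <= c)%O) => //= x2c.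
by case: (boolP (c <= x3)%O) => // cx3; rewrite app3_notchain // bc.
Qed.

Lemma app3_mul3_e3r a b c f x1 x2 x3 : (a <= b)%O -> (b <= c)%O ->
  (x1 <= x2)%O -> (x2 <= x3)%O ->
  app3 (mul3 f (e3 R a b c)) x1 x2 x3 =
  if [&& x3 == c, (a <= x2)%O & (x2 <= b)%O] then app3 f x1 a b else 0.
Proof.
move=> ab bc x12 x23; rewrite mul3E // (bigD1 a) //= [X in _ + X]big1 ?addr0; last first.
  by move=> y1 y1a; rewrite big1 // => y2 _; rewrite app3_e3 (negbTE y1a) mulr0.
rewrite big_mkcond (bigD1 b) //= [X in _ + X]big1 ?addr0; last first.
  by move=> y2 y2b; case: ifP => // _; rewrite app3_e3 (negbTE y2b) andbF mulr0.
rewrite app3_e3 !eqxx ab bc /= !andbT.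
case: (eqVneq x3 c) => [->|_]; last by rewrite mulr0; case: ifP.
rewrite bc /= mulr1 !andbT.
case: (boolP (a <= x2)%O) => //= ax2; case: (boolP (x2 <= b)%O) => //= x2b.
all: rewrite ?andbF //; case: (boolP (x1 <= a)%O) => // x1a.
by rewrite app3_notchain // (negbTE x1a).
Qed.

Lemma mul3_e3_eq0 a b c a' b' c' : (a' != b) || (b' != c) ->
  mul3 (e3 R a b c) (e3 R a' b' c') = 0.
Proof.
move=> nadj; apply: eq_I3 => x1 x2 x3 x12 x23; rewrite mul3E // app30.
apply: big1 => y1 _; apply: big1 => y2 _; rewrite !app3_e3.
case: (eqVneq y1 b) => [->|]; last by rewrite andbF mul0r.
case: (eqVneq y2 c) => [->|]; last by rewrite !andbF mul0r.
by case/orP: nadj => /negbTE; rewrite eq_sym => ->; rewrite ?andbF mulr0.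
Qed.

Lemma mul3_e3_chain a b c e : (a <= b)%O -> (b <= c)%O -> (c <= e)%O ->
  mul3 (e3 R a b c) (e3 R b c e) = \sum_(m | (b <= m <= c)%O) e3 R a m e.
Proof.
move=> ab bc ce; apply: eq_I3 => x1 x2 x3 x12 x23.
rewrite app3_mul3_e3l // app3_sum big_mkcond (bigD1 x2) //= big1 ?addr0 => [|m mx2]; last first.
  by case: ifP => // _; rewrite app3_e3 (eq_sym x2) (negbTE mx2) andbF.
rewrite !app3_e3 !eqxx bc ce /= andbT.
case: (boolP (b <= x2)%O) => [bx2|]; last by rewrite !andbF.
case: (boolP (x2 <= c)%O) => [x2c|]; last by rewrite !andbF.
by rewrite (le_trans ab bx2) (le_trans x2c ce) !andbT; case: (x1 == a).
Qed.

Lemma mul3_e3_idem z : mul3 (e3 R z z z) (e3 R z z z) = e3 R z z z.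
Proof. by rewrite mul3_e3_chain // big_itv_pt. Qed.

Lemma e3_sandwich p h :
  mul3 (mul3 (e3 R p p p) h) (e3 R p p p) = app3 h p p p *: e3 R p p p.
Proof.
apply: eq_I3 => x1 x2 x3 x12 x23; rewrite app3_mul3_e3r // app3Z app3_e3 lexx /= !andbT.
case: (x3 == p); last by rewrite !andbF mulr0.
rewrite -eq_le andbT; case: (eqVneq p x2) => [px2|px2]; last by rewrite !andbF mulr0.
rewrite -px2 in x12; rewrite app3_mul3_e3l // lexx !andbT.
by case: (x1 == p); rewrite ?mulr1 ?mulr0.
Qed.

Lemma idem_app3_aac g a c : covby a c -> mul3 g g = g -> app3 g a a a = 0 ->
  app3 g a a c = app3 g a a c * app3 g a c c.
Proof. by move=> ac gg g0; rewrite -{1}gg app3_mul3_aac // g0 mul0r add0r. Qed.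

Lemma idem_app3_acc g a c : covby a c -> mul3 g g = g -> app3 g c c c = 0 ->
  app3 g a c c = app3 g a a c * app3 g a c c.
Proof. by move=> ac gg g0; rewrite -{1}gg app3_mul3_acc // g0 mulr0 addr0. Qed.

Lemma idem_diag0_acc g a c : covby a c -> mul3 g g = g ->
  (forall q, app3 g q q q = 0) -> app3 g a c c = app3 g a a c.
Proof.
by move=> ac gg g0; rewrite (idem_app3_acc ac gg (g0 c)) -(idem_app3_aac ac gg (g0 a)).
Qed.

Lemma idem_diag0_aac g a c : covby a c -> mul3 g g = g ->
  (forall q, app3 g q q q = 0) -> app3 g a a c * app3 g a a c = app3 g a a c.
Proof. by move=> ac gg g0; rewrite -{2}(idem_diag0_acc ac gg g0) -idem_app3_aac. Qed.

End Incidence3.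

Section LowTriples.
Variables (d : Order.disp_t) (P : finPOrderType d) (R : comNzRingType).
Implicit Types (f g h : I3 P R) (a b c q : P).

(* A pointwise form of [J3 2 h], suited to [app3_mul3_aac] and [app3_mul3_acc]. *)
Definition vanish_low h : Prop := forall a b c, low3 a b c -> app3 h a b c = 0.

Lemma vanish_low0 : vanish_low 0.
Proof. by move=> a b c _; rewrite app30. Qed.

Lemma vanish_lowB f g : vanish_low f -> vanish_low g -> vanish_low (f - g).
Proof. by move=> f0 g0 a b c abc; rewrite app3B f0 ?g0 ?subr0. Qed.

Lemma vanish_lowZ r f : vanish_low f -> vanish_low (r *: f).
Proof. by move=> f0 a b c abc; rewrite app3Z f0 ?mulr0. Qed.

Lemma vanish_low_sum (I : finType) (A : pred I) (F : I -> I3 P R) :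
  (forall i, A i -> vanish_low (F i)) -> vanish_low (\sum_(i | A i) F i).
Proof. by move=> F0 a b c abc; rewrite app3_sum big1 // => i /F0->. Qed.

Lemma vanish_low_mull f g : vanish_low f -> vanish_low (mul3 f g).
Proof.
move=> f0 a b c [[<- <-]|[ac [->|->]]].
- by rewrite app3_mul3_qqq f0 ?mul0r.
- by rewrite app3_mul3_aac // !f0 ?mul0r ?addr0 //; auto.
- by rewrite app3_mul3_acc // !f0 ?mul0r ?addr0 //; auto.
Qed.

Lemma vanish_low_mulr f g : vanish_low g -> vanish_low (mul3 f g).
Proof.
move=> g0 a b c [[<- <-]|[ac [->|->]]].
- by rewrite app3_mul3_qqq g0 ?mulr0.
- by rewrite app3_mul3_aac // !g0 ?mulr0 ?addr0 //; auto.
- by rewrite app3_mul3_acc // !g0 ?mulr0 ?addr0 //; auto.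
Qed.

Lemma vanish_low_J3_2 f : vanish_low f -> J3 2 f.
Proof.
move=> f0 t; rewrite -app3_val; case: t => [[[a b] c] /= /andP[ab bc]] lac.
exact/f0/low3_of_lenP.
Qed.

Lemma J3_app3_eq0 k f a b c : J3 k f -> (a <= b)%O -> (b <= c)%O ->
  (lenP a c < k)%N -> app3 f a b c = 0.
Proof.
move=> fk ab bc lac; have abc : is_chain3 (a, b, c) by apply/andP.
by rewrite /app3 (insubT _ abc); apply: fk.
Qed.

Lemma J3_1_diag f q : J3 1 f -> app3 f q q q = 0.
Proof. by move=> f1; apply: J3_app3_eq0 f1 _ _ _; rewrite ?lexx ?lenPxx. Qed.

End LowTriples.

Section Edges.
Variables (d : Order.disp_t) (P : finPOrderType d) (R : comNzRingType).

Definition e3_edge (x y : P) : I3 P R := e3 R x x y + e3 R x y y.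

Variables (x y : P).
Hypothesis xy : covby x y.

Let xy_eqF : (x == y) = false := lt_eqF (covby_lt xy).
Let yx_eqF : (y == x) = false := gt_eqF (covby_lt xy).

Lemma app3_e3_edge_qqq q : app3 (e3_edge x y) q q q = 0.
Proof.
by rewrite app3D !app3_e3; case: (eqVneq q x) => [->|]; rewrite ?xy_eqF ?andbF ?addr0.
Qed.

Lemma app3_e3_edge_aac a c : app3 (e3_edge x y) a a c = ((a == x) && (c == y))%:R.
Proof.
rewrite app3D !app3_e3 lexx (ltW (covby_lt xy)) !andbT.
by case: (eqVneq a x) => [->|]; rewrite ?xy_eqF ?yx_eqF ?andbF ?addr0.
Qed.

Lemma app3_e3_edge_acc a c : app3 (e3_edge x y) a c c = ((a == x) && (c == y))%:R.
Proof.
rewrite app3D !app3_e3 lexx (ltW (covby_lt xy)) !andbT.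
by case: (eqVneq c y) => [->|]; rewrite ?xy_eqF ?yx_eqF ?andbF ?add0r ?lexx ?andbT.
Qed.

Lemma mul3_e3_edge : mul3 (e3 R x x y) (e3 R x y y) = e3_edge x y.
Proof. by rewrite mul3_e3_chain ?(ltW (covby_lt xy)) // big_covby. Qed.

Lemma mul3_e3_edge_idem : mul3 (e3_edge x y) (e3_edge x y) = e3_edge x y.
Proof.
rewrite mul3Dl !mul3Dr mul3_e3_edge !(@mul3_e3_eq0 _ _ _ x _ _ x) ?xy_eqF ?yx_eqF ?orbT //.
by rewrite add0r !addr0.
Qed.

Lemma mul3_e3_e3_edge : mul3 (e3 R x x x) (e3_edge x y) = e3 R x x y.
Proof.
rewrite mul3Dr mul3_e3_chain ?(ltW (covby_lt xy)) // big_itv_pt.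
by rewrite mul3_e3_eq0 ?xy_eqF ?yx_eqF ?orbT ?addr0.
Qed.

Lemma mul3_e3_edge_e3 : mul3 (e3_edge x y) (e3 R y y y) = e3 R x y y.
Proof.
rewrite mul3Dl mul3_e3_chain ?(ltW (covby_lt xy)) // big_itv_pt.
by rewrite mul3_e3_eq0 ?xy_eqF ?yx_eqF ?add0r.
Qed.

Lemma mul3_e3_edge_e3_eq0 : mul3 (e3_edge x y) (e3 R x x x) = 0.
Proof. by rewrite mul3Dl !mul3_e3_eq0 ?xy_eqF ?yx_eqF ?orbT ?addr0. Qed.

Lemma mul3_e3_e3_edge_eq0 : mul3 (e3 R y y y) (e3_edge x y) = 0.
Proof. by rewrite mul3Dr !mul3_e3_eq0 ?xy_eqF ?yx_eqF ?addr0. Qed.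

End Edges.

Section LowImage.
Variables (d1 d2 : Order.disp_t) (P1 : finPOrderType d1) (P2 : finPOrderType d2).
Variables (R : comNzRingType) (F : {linear I3 P1 R -> I3 P2 R}) (gamma : P2 -> P1).
Hypothesis F_mul : forall f g, F (mul3 f g) = mul3 (F f) (F g).
Hypothesis F_diag : forall h q, app3 (F h) q q q = app3 h (gamma q) (gamma q) (gamma q).

Let F_e3_diag q : app3 (F (e3 R (gamma q) (gamma q) (gamma q))) q q q = 1.
Proof. by rewrite F_diag app3_e3 !eqxx lexx. Qed.

Lemma vanish_low_image_e3 a b c : a != b -> b != c -> vanish_low (F (e3 R a b c)).
Proof.
move=> ab bc; set X := F (e3 R a b c).
have X_diag q : app3 X q q q = 0.
  by rewrite F_diag app3_e3; case: (eqVneq (gamma q) a) => [->|//]; rewrite (negbTE ab) andbF.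
have E_X z : mul3 (F (e3 R z z z)) X = 0.
  rewrite -F_mul mul3_e3_eq0 ?raddf0 //.
  by case: (eqVneq a z) => [<-|//]; rewrite eq_sym ab.
have X_E z : mul3 X (F (e3 R z z z)) = 0.
  rewrite -F_mul mul3_e3_eq0 ?raddf0 //.
  by case: (eqVneq z b) => [->|//]; rewrite bc.
have X_acc_E z a' c' : covby a' c' ->
    app3 (F (e3 R z z z)) a' a' c' * app3 X a' c' c' = 0.
  by move=> ac; move: (congr1 (fun h => app3 h a' c' c') (E_X z));
     rewrite /= app3_mul3_acc // X_diag mulr0 addr0 app30.
have X_aac a' c' : covby a' c' -> app3 X a' a' c' = 0.
  move=> ac; move: (congr1 (fun h => app3 h a' a' c') (E_X (gamma a'))).
  by rewrite /= app3_mul3_aac // X_acc_E // F_e3_diag mul1r addr0 app30.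
move=> a' b' c' [[<- <-] | [ac [->|->]]]; [exact: X_diag | exact: X_aac |].
move: (congr1 (fun h => app3 h a' c' c') (X_E (gamma c'))).
by rewrite /= app3_mul3_acc // X_aac // F_e3_diag mul0r mulr1 add0r app30.
Qed.

Lemma vanish_low_image_e3_aac a m c : (a < m)%O -> (m < c)%O -> vanish_low (F (e3 R a a c)).
Proof.
move=> am mc; have := mul3_e3_chain R (lexx a) (ltW am) (ltW mc).
rewrite (bigD1 a) ?lexx ?(ltW am) //= => /(congr1 F); rewrite F_mul raddfD /= => prod_eq.
have -> : F (e3 R a a c) = mul3 (F (e3 R a a m)) (F (e3 R a m c)) -
    F (\sum_(b | (a <= b <= m)%O && (b != a)) e3 R a b c) by rewrite prod_eq addrK.
apply: vanish_lowB; first by apply/vanish_low_mulr/vanish_low_image_e3; rewrite ?lt_eqF.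
rewrite linear_sum; apply: vanish_low_sum => b /andP[/andP[ab bm] ba].
by apply: vanish_low_image_e3; [rewrite eq_sym | rewrite (lt_eqF (le_lt_trans bm mc))].
Qed.

Lemma vanish_low_image_e3_acc a m c : (a < m)%O -> (m < c)%O -> vanish_low (F (e3 R a c c)).
Proof.
move=> am mc; have := mul3_e3_chain R (ltW am) (ltW mc) (lexx c).
rewrite (bigD1 c) ?lexx ?(ltW mc) //= => /(congr1 F); rewrite F_mul raddfD /= => prod_eq.
have -> : F (e3 R a c c) = mul3 (F (e3 R a m c)) (F (e3 R m c c)) -
    F (\sum_(b | (m <= b <= c)%O && (b != c)) e3 R a b c) by rewrite prod_eq addrK.
apply: vanish_lowB; first by apply/vanish_low_mull/vanish_low_image_e3; rewrite ?lt_eqF.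
rewrite linear_sum; apply: vanish_low_sum => b /andP[/andP[mb bc] bc'].
by apply: vanish_low_image_e3; rewrite // (lt_eqF (lt_le_trans am mb)).
Qed.

Lemma vanish_low_image h : vanish_low h -> vanish_low (F h).
Proof.
move=> h0; rewrite (I3_expansion h) linear_sum; apply: vanish_low_sum => t _.
rewrite linearZ_LR; have [->|ht] := eqVneq (h t) 0; first by rewrite scale0r; apply: vanish_low0.
apply: vanish_lowZ; rewrite -app3_val in ht; case: t ht => [[[a b] c] /= /andP[ab bc]] ht.
have not_low : ~ low3 a b c by move/h0; apply/eqP.
case: (eqVneq a b) => [eab|nab]; case: (eqVneq b c) => [ebc|nbc].
- by case: not_low; left.
- subst b; have ac : (a < c)%O by rewrite lt_neqAle nbc bc.
  have [|m am mc] := not_covby ac; last exact: vanish_low_image_e3_aac am mc.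
  by apply/negP => cov; apply: not_low; apply: low3_aac.
- subst b; have ac : (a < c)%O by rewrite lt_neqAle nab ab.
  have [|m am mc] := not_covby ac; last exact: vanish_low_image_e3_acc am mc.
  by apply/negP => cov; apply: not_low; apply: low3_acc.
- exact: vanish_low_image_e3.
Qed.

End LowImage.


Section EdgeIdempotent.
Variables (d : Order.disp_t) (Q : finPOrderType d) (R : comNzRingType).
Variables (e f S : I3 Q R) (x y : Q).
Hypotheses (e_idem : mul3 e e = e) (f_idem : mul3 f f = f) (S_idem : mul3 S S = S).
Hypothesis e_diag : forall q, app3 e q q q = (q == x)%:R.
Hypothesis f_diag : forall q, app3 f q q q = (q == y)%:R.
Hypothesis S_diag : forall q, app3 S q q q = 0.
(* [mul3] is not associative, so [S = mul3 e (mul3 S f)] would not follow: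
   the factorisation is the image of [e_xxy e_xyy = s] with [e_xxy = e_x s]
   and [e_xyy = s e_y]. *)
Hypothesis S_fact : S = mul3 (mul3 e S) (mul3 S f).
Hypotheses (S_e : mul3 S e = 0) (f_S : mul3 f S = 0).

Let S_acc a c : covby a c -> app3 S a c c = app3 S a a c.
Proof. by move=> ac; apply: idem_diag0_acc. Qed.

Lemma edge_idem_aac_eq0l a c : covby a c -> a != x -> app3 S a a c = 0.
Proof.
move=> ac ax; have e_aaa : app3 e a a a = 0 by rewrite e_diag (negbTE ax).
have S_e_aac : app3 S a a c * app3 e a c c = 0.
  move: (congr1 (fun h => app3 h a a c) S_e).
  by rewrite /= app3_mul3_aac // S_diag mul0r add0r app30.
have eS_aac : app3 (mul3 e S) a a c = 0.
  rewrite app3_mul3_aac // e_aaa mul0r add0r S_acc // (idem_app3_aac ac e_idem e_aaa).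
  by rewrite -mulrA [app3 e a c c * _]mulrC S_e_aac mulr0.
by rewrite S_fact app3_mul3_aac // eS_aac mul0r addr0 app3_mul3_qqq e_aaa !mul0r.
Qed.

Lemma edge_idem_aac_eq0r a c : covby a c -> c != y -> app3 S a a c = 0.
Proof.
move=> ac cy; have f_ccc : app3 f c c c = 0 by rewrite f_diag (negbTE cy).
have f_S_acc : app3 f a a c * app3 S a c c = 0.
  move: (congr1 (fun h => app3 h a c c) f_S).
  by rewrite /= app3_mul3_acc // S_diag mulr0 addr0 app30.
have Sf_acc : app3 (mul3 S f) a c c = 0.
  rewrite app3_mul3_acc // f_ccc mulr0 addr0 (idem_app3_acc ac f_idem f_ccc).
  by rewrite mulrA [app3 S a a c * _]mulrC -S_acc // f_S_acc mul0r.
by rewrite -S_acc // S_fact app3_mul3_acc // Sf_acc mulr0 add0r app3_mul3_qqq f_ccc !mulr0.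
Qed.

Lemma edge_idem_low : indecomposable R ->
  vanish_low S \/ (covby x y /\ vanish_low (S - e3_edge R x y)).
Proof.
move=> Rind.
have S_aac a c : covby a c -> app3 S a a c = ((a == x) && (c == y))%:R * app3 S x x y.
  move=> ac; case: (eqVneq a x) => [ax|ax]; last by rewrite edge_idem_aac_eq0l ?mul0r.
  case: (eqVneq c y) => [cy|cy]; last by rewrite edge_idem_aac_eq0r ?mul0r.
  by rewrite ax cy mul1r.
have S_vanish : ~~ covby x y || (app3 S x x y == 0) -> vanish_low S.
  move=> w0 a b c [[<- <-]|[ac bac]]; first exact: S_diag.
  suff S_aac0 : app3 S a a c = 0 by case: bac => ->; rewrite ?S_acc.
  rewrite S_aac //; case: (boolP ((a == x) && (c == y))) => [/andP[/eqP ea /eqP ec]|_].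
    by rewrite ea ec in ac; move: w0; rewrite ac => /eqP->; rewrite mulr0.
  by rewrite mul0r.
case: (boolP (covby x y)) => [xy|nxy]; last by left; apply: S_vanish; rewrite nxy.
have [w0|w1] := Rind _ (idem_diag0_aac xy S_idem S_diag).
  by left; apply: S_vanish; rewrite w0 eqxx orbT.
right; split=> // a b c abc; apply/eqP; rewrite app3B subr_eq0; apply/eqP.
case: abc => [[<- <-]|[ac [->|->]]].
- by rewrite S_diag app3_e3_edge_qqq.
- by rewrite S_aac // app3_e3_edge_aac // w1 mulr1.
- by rewrite S_acc // S_aac // app3_e3_edge_acc // w1 mulr1.
Qed.

End EdgeIdempotent.

Section DiagonalTransport.
Variables (dP dQ : Order.disp_t) (P : finPOrderType dP) (Q : finPOrderType dQ).
Variables (R : comNzRingType) (Phi : {linear I3 P R -> I3 Q R}) (phi : P -> Q).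
Hypothesis Phi_mul : forall f g, Phi (mul3 f g) = mul3 (Phi f) (Phi g).
Hypothesis Phi_e3 : forall x, J3 1 (Phi (e3 R x x x) - e3 R (phi x) (phi x) (phi x)).

Lemma app3_Phi_e3_diag x q : app3 (Phi (e3 R x x x)) q q q = (q == phi x)%:R.
Proof.
move/eqP: (J3_1_diag q (Phi_e3 x)); rewrite app3B subr_eq0 app3_e3 lexx !andbT => /eqP->.
by case: (q == phi x).
Qed.

Lemma app3_Phi_diag h p : app3 (Phi h) (phi p) (phi p) (phi p) = app3 h p p p.
Proof.
move: (congr1 (fun g => app3 (Phi g) (phi p) (phi p) (phi p)) (e3_sandwich p h)).
by rewrite /= !Phi_mul linearZ_LR app3Z !app3_mul3_qqq app3_Phi_e3_diag eqxx !mulr1 mul1r => ->.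
Qed.

Lemma vanish_low_preimage h : bijective Phi -> vanish_low (Phi h) -> vanish_low h.
Proof.
case=> Psi PhiK PsiK; pose PsiL : {linear I3 Q R -> I3 P R} :=
  HB.pack Psi (GRing.isLinear.Build _ _ _ _ Psi (can2_linear PhiK PsiK)).
have Psi_mul f g : PsiL (mul3 f g) = mul3 (PsiL f) (PsiL g).
  by apply: (can_inj PhiK); rewrite /= PsiK Phi_mul !PsiK.
have Psi_diag g q : app3 (PsiL g) q q q = app3 g (phi q) (phi q) (phi q).
  by rewrite -app3_Phi_diag /= PsiK.
by move/(vanish_low_image Psi_mul Psi_diag); rewrite /= PhiK.
Qed.

Lemma Phi_e3_edge_low x y : indecomposable R -> bijective phi -> covby x y ->
  vanish_low (Phi (e3_edge R x y)) \/
  (covby (phi x) (phi y) /\ vanish_low (Phi (e3_edge R x y) - e3_edge R (phi x) (phi y))).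
Proof.
move=> Rind [phi' phiK phi'K] xy.
apply: (@edge_idem_low _ _ _ (Phi (e3 R x x x)) (Phi (e3 R y y y))) => //.
- by rewrite -Phi_mul mul3_e3_idem.
- by rewrite -Phi_mul mul3_e3_idem.
- by rewrite -Phi_mul mul3_e3_edge_idem.
- exact: app3_Phi_e3_diag.
- exact: app3_Phi_e3_diag.
- by move=> q; rewrite -[q]phi'K app3_Phi_diag app3_e3_edge_qqq.
- by rewrite -!Phi_mul mul3_e3_e3_edge ?mul3_e3_edge_e3 ?mul3_e3_edge.
- by rewrite -Phi_mul mul3_e3_edge_e3_eq0 ?raddf0.
- by rewrite -Phi_mul mul3_e3_e3_edge_eq0 ?raddf0.
Qed.

End DiagonalTransport.

Theorem lemma3p4 (dP dQ : Order.disp_t) (P : finPOrderType dP)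
  (Q : finPOrderType dQ) (R : comNzRingType)
  (Hind : indecomposable R)
  (Phi : {linear I3 P R -> I3 Q R})
  (Phi_mul : forall f g : I3 P R, Phi (mul3 f g) = mul3 (Phi f) (Phi g))
  (Phi_bij : bijective Phi)
  (phi : P -> Q) (phi_bij : bijective phi)
  (Hphi : forall x : P, J3 1 (Phi (e3 R x x x) - e3 R (phi x) (phi x) (phi x))) :
  forall x y : P, (x < y)%O -> lenP x y = 1%N ->
    (phi x < phi y)%O /\
    exists sigma : I3 Q R, J3 2 sigma /\
      Phi (e3 R x x y + e3 R x y y) =
      e3 R (phi x) (phi x) (phi y) + e3 R (phi x) (phi y) (phi y) + sigma.
Proof.
move=> x y xy lxy; have cov : covby x y by apply: covby_of_lenP; rewrite ?lxy.
have [Phi_low | [cov' Phi_low]] := Phi_e3_edge_low Phi_mul Hphi Hind phi_bij cov.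
  have /eqP := vanish_low_preimage Phi_mul Hphi Phi_bij Phi_low (low3_aac cov).
  by rewrite app3_e3_edge_aac // !eqxx oner_eq0.
split; first exact: covby_lt cov'.
exists (Phi (e3_edge R x y) - e3_edge R (phi x) (phi y)); split; first exact: vanish_low_J3_2.
by rewrite [RHS]addrC subrK.
Qed.
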